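(* In the $q$-sphere setting described in the context, let $\alpha,\beta\in\mathbb{C}$ and $\delta\in\mathbb{R}\setminus\{0\}$ satisfy $\delta^2\alpha^*=\beta q^2$. Then $(\nabla_{\mathcal S},\sigma_{\mathcal S})$ is a left bimodule connection on $\mathcal S$, and $D=\triangleright\circ\nabla_{\mathcal{S}}$, given by $D(xf^++yf^-)=\alpha q^{-1}(\partial_+y)f^++\beta q(\partial_-x)f^-$, together with $\mathcal{J}$ and $\gamma$ satisfy: $\mathcal J^2=-1$, $\mathcal J\gamma=-\gamma\mathcal J$, $\gamma^2=1$, $[\gamma,a]=0$, $D\gamma=-\gamma D$, $[a,\mathcal J b\mathcal J^{-1}]=0$, $\mathcal J D=D\mathcal J$, and $[[D,a],\mathcal J b\mathcal J^{-1}]=0$ for all $a,b\in\mathbb C_q[S^2]$ (the algebraic conditions of a real spectral triple of dimension $2$ with $\epsilon=-1,\epsilon'=1,\epsilon''=-1$).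
   Context: $q$ is a real nonzero number. $\mathbb{C}_q[SU_2]$ is the $*$-algebra generated by $a,b,c,d$ with $ba=qab$, $ca=qac$, $db=qbd$, $dc=qcd$, $bc=cb$, $da-ad=(q-q^{-1})bc$, $ad-q^{-1}bc=1$, graded by $|a|=|c|=1$, $|b|=|d|=-1$. It carries Woronowicz's left-covariant 3-dimensional $*$-calculus $\Omega^1$, free as a left module with basis $e^0,e^+,e^-$ of degrees $0,2,-2$, with $e^0x=q^{2|x|}xe^0$, $e^\pm x=q^{|x|}xe^\pm$ for homogeneous $x$, and $(e^\pm)^*=-q^{\mp1}e^\mp$. Let $\pi:\Omega^1\to\Omega^1_{hor}$ be the left-module projection killing $e^0$, and write $\pi{\rm d}x=(\partial_+x)e^++(\partial_-x)e^-$. $\mathbb{C}_q[S^2]$ is the degree-0 subalgebra; its calculus $\Omega^1=\Omega^{1,0}\oplus\Omega^{0,1}$ with $\Omega^{1,0}=\{fe^+:|f|=-2\}$, $\Omega^{0,1}=\{fe^-:|f|=2\}$ and ${\rm d}=\pi{\rm d}$. The spinor bimodule is $\mathcal S=\mathcal S_+\oplus\mathcal S_-$, $\mathcal S_\pm=\{xf^\pm: x\in\mathbb C_q[SU_2],|x|=\mp1\}$, where $f^\pm$ are formal symbols commuting with $\mathbb C_q[S^2]$ (so $\mathcal S_\pm$ is the degree $\mp1$ subspace with left/right multiplication). Writing $k=a\otimes d-q^{-1}c\otimes b$ and $k'=d\otimes a-qb\otimes c$: $\nabla_{\mathcal S}(xf^++yf^-)=\pi{\rm d}x.a\otimes d f^+-q^{-1}\pi{\rm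 d}x.c\otimes bf^++\pi{\rm d}y.d\otimes af^--q\,\pi{\rm d}y.b\otimes cf^-$, and $\sigma_{\mathcal S}((xf^++yf^-)\otimes fe^\pm)=xfe^\pm(a\otimes d-q^{-1}c\otimes b)f^++yfe^\pm(d\otimes a-qb\otimes c)f^-$ for $|f|=\mp2$. The Clifford action: $fe^+\triangleright yf^-=\alpha\,fyf^+$, $fe^-\triangleright xf^+=\beta\,fxf^-$, and $fe^+\triangleright xf^+=fe^-\triangleright yf^-=0$. $\mathcal J(xf^\pm)=\pm\delta^{\pm1}x^*f^\mp$ (antilinear), $\gamma=\pm\mathrm{id}$ on $\mathcal S_\pm$. *)

From HB Require Import structures.
From mathcomp Require Import all_boot all_order all_algebra.
From mathcomp Require Import reals complex.
Set Implicit Arguments.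
Unset Strict Implicit.
Unset Printing Implicit Defensive.
Import Order.TTheory GRing.Theory Num.Theory.
Local Open Scope ring_scope.

(*  A        : a complex algebra (the carrier of C_q[SU_2]);                *)
(*  dp, dm   : the partial derivatives of Woronowicz's 3D calculus,         *)
(*             pi d x = (dp x) e^+ + (dm x) e^-.                            *)
(* A horizontal 1-form  f e^+ + g e^-  is represented by the pair (f, g).  *)

Section Setting.
Variable C : numClosedFieldType.
Variable q : C.
Variable A : algType C.

(* involution of a horizontal form (f,g) = f e^+ + g e^- whose coefficient  *)
(* f has degree n-2 and g has degree n+2, computed with                     *)
(* (e^+)^* = -q^-1 e^-, (e^-)^* = -q e^+, (f e)^* = e^* f^* and the         *)
(* commutation rule e^{+-} y = q^{|y|} y e^{+-}.                            *)
Definition hstar (star : A -> A) (n : int) (w : A * A) : A * A :=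
  ((- q) * q ^ (- (n + 2)) *: star w.2, (- q^-1) * q ^ (- (n - 2)) *: star w.1).

Record qSU2 := QSU2 {
  ga : A; gb : A; gc : A; gd : A;
  star : A -> A;
  deg : int -> A -> Prop;
  dp : A -> A;
  dm : A -> A;
  rel_ba : gb * ga = q *: (ga * gb);
  rel_ca : gc * ga = q *: (ga * gc);
  rel_db : gd * gb = q *: (gb * gd);
  rel_dc : gd * gc = q *: (gc * gd);
  rel_bc : gb * gc = gc * gb;
  rel_da : gd * ga - ga * gd = (q - q^-1) *: (gb * gc);
  rel_det : ga * gd - q^-1 *: (gb * gc) = 1;
  starD : forall x y, star (x + y) = star x + star y;
  starZ : forall (k : C) x, star (k *: x) = k^* *: star x;
  starM : forall x y, star (x * y) = star y * star x;
  starK : forall x, star (star x) = x;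
  star_a : star ga = gd;
  star_b : star gb = - q^-1 *: gc;
  star_c : star gc = - q *: gb;
  star_d : star gd = ga;
  deg0 : forall n, deg n 0;
  degD : forall n x y, deg n x -> deg n y -> deg n (x + y);
  degZ : forall n (k : C) x, deg n x -> deg n (k *: x);
  degM : forall m n x y, deg m x -> deg n y -> deg (m + n) (x * y);
  deg1 : deg 0 1;
  deg_a : deg 1 ga;
  deg_b : deg (-1) gb;
  deg_c : deg 1 gc;
  deg_d : deg (-1) gd;
  deg_star : forall n x, deg n x -> deg (- n) (star x);
  deg_span : forall x, exists s : seq (int * A),
      (forall p, p \in s -> deg p.1 p.2) /\ x = \sum_(p <- s) p.2;
  dpL : forall (k : C) x y, dp (k *: x + y) = k *: dp x + dp y;
  dmL : forall (k : C) x y, dm (k *: x + y) = k *: dm x + dm y;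
  (* Leibniz rule d(xy) = (dx).y + x dy, with e^{+-} y = q^{|y|} y e^{+-} *)
  dp_leib : forall n x y, deg n y -> dp (x * y) = dp x * (q ^ n *: y) + x * dp y;
  dm_leib : forall n x y, deg n y -> dm (x * y) = dm x * (q ^ n *: y) + x * dm y;
  (* values on generators: da = a e^0 + q b e^+, db = a e^- - q^-2 b e^0,  *)
  (* dc = c e^0 + q d e^+, dd = c e^- - q^-2 d e^0                          *)
  dp_a : dp ga = q *: gb;
  dp_b : dp gb = 0;
  dp_c : dp gc = q *: gd;
  dp_d : dp gd = 0;
  dm_a : dm ga = 0;
  dm_b : dm gb = ga;
  dm_c : dm gc = 0;
  dm_d : dm gd = gc;
  (* e^{+-} have degree +-2 *)
  dp_deg : forall n x, deg n x -> deg (n - 2) (dp x);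
  dm_deg : forall n x, deg n x -> deg (n + 2) (dm x);
  (* *-calculus: pi d (x^* ) = (pi d x)^* *)
  d_star : forall n x, deg n x -> (dp (star x), dm (star x)) = hstar star n (dp x, dm x)
}.

Variable X : qSU2.

Local Notation a := (ga X).
Local Notation b := (gb X).
Local Notation c := (gc X).
Local Notation d := (gd X).

Definition pid (x : A) : A * A := (dp X x, dm X x).
(* right multiplication of a horizontal form by an element z of degree n:  *)
(* (f e^+ + g e^-) z = q^n (f z e^+ + g z e^-)                              *)
Definition rmulh (w : A * A) (n : int) (z : A) : A * A :=
  (q ^ n *: (w.1 * z), q ^ n *: (w.2 * z)).
Definition lmul (x : A) (w : A * A) : A * A := (x * w.1, x * w.2).
Definition rmul (w : A * A) (g : A) : A * A := (w.1 * g, w.2 * g).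

(* C_q[S^2] = degree 0 part *)
Definition inB (g : A) : Prop := deg X 0 g.
(* Omega^1(S^2): w = w.1 e^+ + w.2 e^- with |w.1| = -2, |w.2| = 2 *)
Definition inO1 (w : A * A) : Prop := deg X (-2) w.1 /\ deg X 2 w.2.
(* spinors: s = s.1 f^+ + s.2 f^- with |s.1| = -1, |s.2| = 1 *)
Definition inS (s : A * A) : Prop := deg X (-1) s.1 /\ deg X 1 s.2.

(* A model T of Omega^1 (x)_{C_q[S^2]} S: a C_q[S^2]-bimodule T with a     *)
(* biadditive, C-bilinear, C_q[S^2]-balanced map tns : Omega^1 x S -> T      *)
(* compatible with the bimodule structures.  (The balanced tensor product  *)
(* itself is such a model.)                                                 *)
Record bal_tensor (T : lmodType C) := BalTensor {
  tns : A * A -> A * A -> T;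
  lT : A -> T -> T;
  rT : T -> A -> T;
  tnsDl : forall w w' s, inO1 w -> inO1 w' -> inS s ->
      tns (w + w') s = tns w s + tns w' s;
  tnsDr : forall w s s', inO1 w -> inS s -> inS s' ->
      tns w (s + s') = tns w s + tns w s';
  tnsZl : forall (k : C) w s, inO1 w -> inS s -> tns (k *: w) s = k *: tns w s;
  tnsZr : forall (k : C) w s, inO1 w -> inS s -> tns w (k *: s) = k *: tns w s;
  tns_bal : forall g w s, inB g -> inO1 w -> inS s ->
      tns (rmul w g) s = tns w (lmul g s);
  lT_tns : forall g w s, inB g -> inO1 w -> inS s ->
      lT g (tns w s) = tns (lmul g w) s;
  rT_tns : forall g w s, inB g -> inO1 w -> inS s ->
      rT (tns w s) g = tns w (rmul s g);
  lTD : forall g t t', lT g (t + t') = lT g t + lT g t';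
  lTZ : forall g (k : C) t, lT g (k *: t) = k *: lT g t;
  rTD : forall g t t', rT (t + t') g = rT t g + rT t' g;
  rTZ : forall g (k : C) t, rT (k *: t) g = k *: rT t g
}.

Section Connection.
Variable T : lmodType C.
Variable TT : bal_tensor T.

Local Notation "w 'ox' s" := (tns TT w s) (at level 40).

(* nabla_S (x f^+ + y f^-) =                                                *)
(*   pi dx.a (x) d f^+ - q^-1 pi dx.c (x) b f^+                              *)
(*   + pi dy.d (x) a f^- - q pi dy.b (x) c f^-                               *)
Definition nablaS (s : A * A) : T :=
  rmulh (pid s.1) 1 a ox (d, 0) - q^-1 *: (rmulh (pid s.1) 1 c ox (b, 0))
  + rmulh (pid s.2) (-1) d ox (0, a) - q *: (rmulh (pid s.2) (-1) b ox (0, c)).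

(* sigma_S ((x f^+ + y f^-) (x) w), on the representative pair (s, w) *)
Definition sigmaS (s w : A * A) : T :=
  rmulh (lmul s.1 w) 1 a ox (d, 0) - q^-1 *: (rmulh (lmul s.1 w) 1 c ox (b, 0))
  + rmulh (lmul s.2 w) (-1) d ox (0, a) - q *: (rmulh (lmul s.2 w) (-1) b ox (0, c)).

Definition is_bimodule_connection : Prop :=
  (forall (k : C) s s', inS s -> inS s' -> nablaS (k *: s + s') = k *: nablaS s + nablaS s')
  /\ (forall g s, inB g -> inS s -> nablaS (lmul g s) = pid g ox s + lT TT g (nablaS s))
  (* sigma is a well defined map on S (x)_{C_q[S^2]} Omega^1: biadditive, *)
  (* C-bilinear and balanced *)
  /\ (forall s s' w, inS s -> inS s' -> inO1 w -> sigmaS (s + s') w = sigmaS s w + sigmaS s' w)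
  /\ (forall s w w', inS s -> inO1 w -> inO1 w' -> sigmaS s (w + w') = sigmaS s w + sigmaS s w')
  /\ (forall (k : C) s w, inS s -> inO1 w -> sigmaS (k *: s) w = k *: sigmaS s w)
  /\ (forall (k : C) s w, inS s -> inO1 w -> sigmaS s (k *: w) = k *: sigmaS s w)
  /\ (forall g s w, inB g -> inS s -> inO1 w -> sigmaS (rmul s g) w = sigmaS s (lmul g w))
  /\ (forall g s w, inB g -> inS s -> inO1 w -> sigmaS (lmul g s) w = lT TT g (sigmaS s w))
  /\ (forall g s w, inB g -> inS s -> inO1 w -> sigmaS s (rmul w g) = rT TT (sigmaS s w) g)
  /\ (forall g s, inB g -> inS s -> nablaS (rmul s g) = rT TT (nablaS s) g + sigmaS s (pid g)).

Definition is_clifford (alpha beta : C) (cl : T -> A * A) : Prop :=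
  (forall t t', cl (t + t') = cl t + cl t')
  /\ (forall (k : C) t, cl (k *: t) = k *: cl t)
  /\ (forall w s, inO1 w -> inS s ->
        cl (w ox s) = (alpha *: (w.1 * s.2), beta *: (w.2 * s.1))).

End Connection.

Definition DiracS (alpha beta : C) (s : A * A) : A * A :=
  (alpha * q^-1 *: dp X s.2, beta * q *: dm X s.1).

Definition JS (delta : C) (s : A * A) : A * A :=
  (- delta^-1 *: star X s.2, delta *: star X s.1).
Definition JSinv (delta : C) (s : A * A) : A * A := - JS delta s.
Definition gammaS (s : A * A) : A * A := (s.1, - s.2).

Definition real_spectral_conditions (alpha beta delta : C) : Prop :=
  let D := DiracS alpha beta in
  let J := JS delta in
  let Ji := JSinv delta in
  let op h t := J (lmul h (Ji t)) in
  (forall s, inS s -> J (J s) = - s)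
  /\ (forall s, inS s -> J (gammaS s) = - gammaS (J s))
  /\ (forall s, inS s -> gammaS (gammaS s) = s)
  /\ (forall g s, inB g -> inS s -> gammaS (lmul g s) = lmul g (gammaS s))
  /\ (forall s, inS s -> D (gammaS s) = - gammaS (D s))
  /\ (forall g h s, inB g -> inB h -> inS s -> lmul g (op h s) = op h (lmul g s))
  /\ (forall s, inS s -> J (D s) = D (J s))
  /\ (forall g h s, inB g -> inB h -> inS s ->
        (D (lmul g (op h s)) - lmul g (D (op h s)))
        - (op h (D (lmul g s)) - op h (lmul g (D s))) = 0).

End Setting.

From HB Require Import structures.
From mathcomp Require Import all_boot all_order all_algebra.
From mathcomp Require Import reals complex.
From mathcomp Require Import ring zify.
Set Implicit Arguments.
Unset Strict Implicit.
Unset Printing Implicit Defensive.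
Import Order.TTheory GRing.Theory Num.Theory.
Local Open Scope ring_scope.

(* [nablaS] and [sigmaS] are both of the form [q K(f1) + q^-1 K'(f2)], where
   [K(f) = f a (x) d f^+ - q^-1 f c (x) b f^+] is [f] acting on [k] and [K'] is
   the same with [k'].  Because [a d - q^-1 c b = 1] and [d a - q b c = 1], such
   a map is the identity on balanced tensors, [K(w y) = w (x) y f^+], and
   inserting [1] between [f] and [g] shows [K(f g) = K(f) g] for [g] of degree
   [0]; with the Leibniz rule for [pi d] this gives every bimodule-connection
   axiom.  The Clifford action contracts [k] and [k'] to [1], which yields [D].
   For the reality conditions, [J b J^-1] is right multiplication by [b^*],
   [[D, g]] is a right-module map (Clifford multiplication by [pi d g]), and
   [J D = D J] reduces, through [pi d (x^* ) = (pi d x)^*], to the relation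
   [delta^2 alpha^* = beta q^2] and its conjugate. *)

Section QSphere.
Variables (R : realType) (q : R[i]) (A : algType R[i]) (X : qSU2 q A).

Local Notation a := (ga X).
Local Notation b := (gb X).
Local Notation c := (gc X).
Local Notation d := (gd X).
Local Notation deg := (deg X).
Local Notation dp := (dp X).
Local Notation dm := (dm X).
Local Notation star := (star X).
Local Notation inB := (inB X).
Local Notation inO1 := (inO1 X).
Local Notation inS := (inS X).

Lemma degM_eq m n p x y : deg m x -> deg n y -> m + n = p -> deg p (x * y).
Proof. by move=> hx hy <-; apply: degM. Qed.

Lemma degN n x : deg n x -> deg n (- x).
Proof. by move=> h; rewrite -scaleN1r; apply: degZ. Qed.

Lemma deg_dp_eq n p x : deg n x -> n - 2 = p -> deg p (dp x).
Proof. by move=> h <-; apply: dp_deg. Qed.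

Lemma deg_dm_eq n p x : deg n x -> n + 2 = p -> deg p (dm x).
Proof. by move=> h <-; apply: dm_deg. Qed.

Lemma deg_star_eq n p x : deg n x -> - n = p -> deg p (star x).
Proof. by move=> h <-; apply: deg_star. Qed.

Ltac deg_eq := first [reflexivity | lia].

Ltac deg_tac := match goal with
  | |- deg _ (_ * 0) => rewrite mulr0; apply: deg0
  | |- deg _ (0 * _) => rewrite mul0r; apply: deg0
  | |- deg _ (_ * _) => eapply degM_eq; [deg_tac | deg_tac | deg_eq]
  | |- deg _ (_ *: _) => apply: degZ; deg_tac
  | |- deg _ (_ + _) => apply: degD; deg_tac
  | |- deg _ (- _) => apply: degN; deg_tac
  | |- deg _ (dp _) => eapply deg_dp_eq; [deg_tac | deg_eq]
  | |- deg _ (dm _) => eapply deg_dm_eq; [deg_tac | deg_eq]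
  | |- deg _ (star _) => eapply deg_star_eq; [deg_tac | deg_eq]
  | |- deg _ 0 => apply: deg0
  | |- deg _ 1 => apply: deg1
  | |- deg _ a => apply: deg_a
  | |- deg _ b => apply: deg_b
  | |- deg _ c => apply: deg_c
  | |- deg _ d => apply: deg_d
  | _ => eassumption
  end.

Lemma det_adcb : a * d - q^-1 *: (c * b) = 1.
Proof. by rewrite -(rel_bc X) (rel_det X). Qed.

Lemma det_dabc : d * a - q *: (b * c) = 1.
Proof.
have -> : d * a = a * d + (q - q^-1) *: (b * c) by rewrite -(rel_da X) addrC subrK.
by rewrite scalerBl addrA addrAC addrK (rel_det X).
Qed.

Lemma pairD (f f' : A * A) : f + f' = (f.1 + f'.1, f.2 + f'.2).
Proof. by []. Qed.

Lemma pairN (f : A * A) : - f = (- f.1, - f.2).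
Proof. by []. Qed.

Lemma pairB (f f' : A * A) : f - f' = (f.1 - f'.1, f.2 - f'.2).
Proof. by []. Qed.

Lemma pairZ l (f : A * A) : l *: f = (l *: f.1, l *: f.2).
Proof. by []. Qed.

Lemma pairBZ l (f f' : A * A) : f - l *: f' = (f.1 - l *: f'.1, f.2 - l *: f'.2).
Proof. by []. Qed.

Lemma rmulDl (f f' : A * A) x : rmul (f + f') x = rmul f x + rmul f' x.
Proof. by rewrite /rmul /= !mulrDl. Qed.

Lemma rmulZl k (f : A * A) x : rmul (k *: f) x = k *: rmul f x.
Proof. by rewrite /rmul /= -!scalerAl. Qed.

Lemma rmulA (f : A * A) x y : rmul (rmul f x) y = rmul f (x * y).
Proof. by rewrite /rmul /= !mulrA. Qed.

Lemma lmulA x y (f : A * A) : lmul x (lmul y f) = lmul (x * y) f.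
Proof. by rewrite /lmul /= !mulrA. Qed.

Lemma lmul_rmul x (f : A * A) y : lmul x (rmul f y) = rmul (lmul x f) y.
Proof. by rewrite /lmul /rmul /= !mulrA. Qed.

Lemma rmulBr l (f : A * A) x y : rmul f (x - l *: y) = rmul f x - l *: rmul f y.
Proof. by rewrite /rmul /= !mulrBr -!scalerAr. Qed.

Lemma rmulBl (f f' : A * A) x : rmul (f - f') x = rmul f x - rmul f' x.
Proof. by rewrite /rmul /= !mulrBl. Qed.

Lemma lmulDl x y (f : A * A) : lmul (x + y) f = lmul x f + lmul y f.
Proof. by rewrite /lmul /= !mulrDl. Qed.

Lemma lmulDr x (f f' : A * A) : lmul x (f + f') = lmul x f + lmul x f'.
Proof. by rewrite /lmul /= !mulrDr. Qed.

Lemma lmulZl k x (f : A * A) : lmul (k *: x) f = k *: lmul x f.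
Proof. by rewrite /lmul /= -!scalerAl. Qed.

Lemma lmulZr k x (f : A * A) : lmul x (k *: f) = k *: lmul x f.
Proof. by rewrite /lmul /= -!scalerAr. Qed.

Ltac graded := rewrite /inO1 /inS /inB /=; try split; deg_tac.

Definition frame_dom (m : int) (f : A * A) := deg (-2 - m) f.1 /\ deg (2 - m) f.2.

Lemma frame_dom_rmul m f u : frame_dom m f -> deg m u -> inO1 (rmul f u).
Proof. by case=> h1 h2 hu; graded. Qed.

Lemma frame_domZ m l f : frame_dom m f -> frame_dom m (l *: f).
Proof. by case=> h1 h2; split; apply: degZ. Qed.

Definition conn_dom (f1 f2 : A * A) := frame_dom 1 f1 /\ frame_dom (-1) f2.

Lemma inSZ l s : inS s -> inS (l *: s).
Proof. by case=> h1 h2; split; apply: degZ. Qed.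

(* An element [u1 (x) v1 - k u2 (x) v2] with [u1 v1 - k u2 v2 = 1], together
   with the inclusion [cf_spinor] of degree [-m] elements into spinors; the
   elements [k] and [k'] of the connection formula are coframes. *)
Record coframe (m : int) := Coframe {
  cf_scale : R[i];
  cf_u1 : A; cf_u2 : A; cf_v1 : A; cf_v2 : A;
  cf_spinor : A -> A * A;
  cf_u1_deg : deg m cf_u1;
  cf_u2_deg : deg m cf_u2;
  cf_v1_deg : deg (- m) cf_v1;
  cf_v2_deg : deg (- m) cf_v2;
  cf_unit : cf_u1 * cf_v1 - cf_scale *: (cf_u2 * cf_v2) = 1;
  cf_spinor_inS : forall x, deg (- m) x -> inS (cf_spinor x);
  cf_spinor_lmul : forall g x, lmul g (cf_spinor x) = cf_spinor (g * x);
  cf_spinor_rmul : forall x g, rmul (cf_spinor x) g = cf_spinor (x * g);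
  cf_spinorB : forall x y,
    cf_spinor (x - cf_scale *: y) = cf_spinor x - cf_scale *: cf_spinor y }.

Lemma plus_spinor_inS x : deg (-1) x -> inS (x, 0).
Proof. by move=> hx; graded. Qed.

Lemma minus_spinor_inS x : deg 1 x -> inS (0, x).
Proof. by move=> hx; graded. Qed.

Lemma plus_spinor_lmul (g x : A) : lmul g (x, 0) = (g * x, 0).
Proof. by rewrite /lmul /= mulr0. Qed.

Lemma minus_spinor_lmul (g x : A) : lmul g (0, x) = (0, g * x).
Proof. by rewrite /lmul /= mulr0. Qed.

Lemma plus_spinor_rmul (x g : A) : rmul (x, 0) g = (x * g, 0).
Proof. by rewrite /rmul /= mul0r. Qed.

Lemma minus_spinor_rmul (x g : A) : rmul (0, x) g = (0, x * g).
Proof. by rewrite /rmul /= mul0r. Qed.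

Lemma plus_spinorB l x y : (x - l *: y, 0) = (x, 0) - l *: (y, 0) :> A * A.
Proof. by rewrite pairBZ /= scaler0 subr0. Qed.

Lemma minus_spinorB l x y : (0, x - l *: y) = (0, x) - l *: (0, y) :> A * A.
Proof. by rewrite pairBZ /= scaler0 subr0. Qed.

Definition plus_coframe : coframe 1 :=
  @Coframe 1 q^-1 a c d b (fun x => (x, 0)) (deg_a X) (deg_c X) (deg_d X) (deg_b X)
    det_adcb plus_spinor_inS plus_spinor_lmul plus_spinor_rmul (plus_spinorB q^-1).

Definition minus_coframe : coframe (-1) :=
  @Coframe (-1) q d b a c (fun x => (0, x)) (deg_d X) (deg_b X) (deg_a X) (deg_c X)
    det_dabc minus_spinor_inS minus_spinor_lmul minus_spinor_rmul (minus_spinorB q).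

Lemma rmulhE (w : A * A) n z : rmulh q w n z = q ^ n *: rmul w z.
Proof. by []. Qed.

Lemma pid_linear l x y : pid X (l *: x + y) = l *: pid X x + pid X y.
Proof. by rewrite /pid dpL dmL. Qed.

Lemma pid_mul n g x : deg n x -> pid X (g * x) = q ^ n *: rmul (pid X g) x + lmul g (pid X x).
Proof. by move=> hx; rewrite /pid (dp_leib g hx) (dm_leib g hx) -!scalerAr. Qed.

Lemma conn_dom_pid s : inS s -> conn_dom (pid X s.1) (pid X s.2).
Proof. by case=> hx hy; split; split; rewrite /=; deg_tac. Qed.

Lemma conn_dom_lmul s w : inS s -> inO1 w -> conn_dom (lmul s.1 w) (lmul s.2 w).
Proof. by case=> hx hy [hw1 hw2]; split; split; rewrite /=; deg_tac. Qed.

Section Tensor.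
Variables (T : lmodType R[i]) (TT : bal_tensor X T).
Local Notation "w 'ox' s" := (tns TT w s) (at level 40).

Lemma tnsBr w s s' : inO1 w -> inS s -> inS s' -> w ox (s - s') = w ox s - w ox s'.
Proof.
move=> hw [hs1 hs2] [hs1' hs2'].
by rewrite -(scaleN1r s') tnsDr ?tnsZr ?scaleN1r //; graded.
Qed.

Lemma lTN g t : lT TT g (- t) = - lT TT g t.
Proof. by rewrite -(scaleN1r t) lTZ scaleN1r. Qed.

Lemma rTN g t : rT TT (- t) g = - rT TT t g.
Proof. by rewrite -(scaleN1r t) rTZ scaleN1r. Qed.

Section Frame.
Context {m : int} (F : coframe m).
Local Notation k := (cf_scale F).
Local Notation u1 := (cf_u1 F).
Local Notation u2 := (cf_u2 F).
Local Notation v1 := (cf_v1 F).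
Local Notation v2 := (cf_v2 F).
Local Notation e := (cf_spinor F).

Lemma cf_spinor_inSZ l x : deg (- m) x -> inS (l *: e x).
Proof. by move=> hx; apply: inSZ; apply: cf_spinor_inS. Qed.

Local Ltac frame_side :=
  have := cf_u1_deg F; have := cf_u2_deg F; have := cf_v1_deg F; have := cf_v2_deg F; intros;
  solve [exact: (frame_dom_rmul (m := m)) | apply: cf_spinor_inS; deg_tac | apply: cf_spinor_inSZ; deg_tac
    | rewrite /frame_dom /rmul /=; split; deg_tac | graded].

Definition frame_tns (f : A * A) : T :=
  rmul f u1 ox e v1 - k *: (rmul f u2 ox e v2).

Lemma frame_tnsD f f' :
  frame_dom m f -> frame_dom m f' -> frame_tns (f + f') = frame_tns f + frame_tns f'.
Proof.
move=> hf hf'; rewrite /frame_tns !rmulDl !tnsDl; try frame_side.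
by rewrite scalerDr opprD addrACA.
Qed.

Lemma frame_tnsZ l f : frame_dom m f -> frame_tns (l *: f) = l *: frame_tns f.
Proof.
move=> hf; rewrite /frame_tns !rmulZl !tnsZl; try frame_side.
by rewrite scalerBr !scalerA mulrC.
Qed.

Lemma frame_tnsB l f f' :
  frame_dom m f -> frame_dom m f' -> frame_tns (f - l *: f') = frame_tns f - l *: frame_tns f'.
Proof.
move=> hf hf'; have hlf' := frame_domZ (- l) hf'.
by rewrite -(scaleNr l f') frame_tnsD ?frame_tnsZ // scaleNr.
Qed.

Lemma frame_tns_lmul g f : inB g -> frame_dom m f -> frame_tns (lmul g f) = lT TT g (frame_tns f).
Proof.
move=> hg hf; rewrite /frame_tns lTD lTN lTZ.
by rewrite !lT_tns ?lmul_rmul //; frame_side.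
Qed.

Lemma frame_tns_rmul_tns w x : inO1 w -> deg (- m) x -> frame_tns (rmul w x) = w ox e x.
Proof.
move=> hw hx; rewrite /frame_tns !rmulA !tns_bal //; try frame_side.
rewrite !cf_spinor_lmul -tnsZr -?tnsBr //; try frame_side.
by rewrite -cf_spinorB -!mulrA scalerAr -mulrBr cf_unit mulr1.
Qed.

(* Insert [1 = u1 v1 - k u2 v2] between [f] and [g]: each of the two resulting
   terms is a tensor by [frame_tns_rmul_tns], across which [g] can be moved. *)
Lemma frame_tns_rmul g f : inB g -> frame_dom m f -> frame_tns (rmul f g) = rT TT (frame_tns f) g.
Proof.
move=> hg hf; have [hf1 hf2] := hf.
have -> : rmul f g = rmul (rmul f u1) (v1 * g) - k *: rmul (rmul f u2) (v2 * g).
  by rewrite !rmulA !mulrA -rmulBr scalerAl -mulrBl cf_unit mul1r.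
rewrite frame_tnsB ?frame_tns_rmul_tns; try frame_side.
by rewrite /frame_tns rTD rTN rTZ !rT_tns ?cf_spinor_rmul //; frame_side.
Qed.

Lemma frame_tns_clifford alpha beta cl f : is_clifford TT alpha beta cl -> frame_dom m f ->
  cl (frame_tns f) = (alpha *: (f.1 * (e 1).2), beta *: (f.2 * (e 1).1)).
Proof.
case=> clD [clZ clT] hf.
have clB l t t' : cl (t - l *: t') = cl t - l *: cl t'.
  by rewrite clD -scaleNr clZ scaleNr.
rewrite /frame_tns clB !clT; try frame_side.
rewrite -(cf_unit F) cf_spinorB -!cf_spinor_lmul /=.
by rewrite pairBZ /=; congr (_, _);
  rewrite mulrBr -scalerAr !mulrA scalerBr !scalerA [k * _]mulrC.
Qed.

End Frame.

(* The factors [q^(+-1)] come from moving [e^+-] past [a, c] resp. [d, b]. *)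
Definition conn_map (f1 f2 : A * A) : T :=
  q *: frame_tns plus_coframe f1 + q^-1 *: frame_tns minus_coframe f2.

Lemma conn_mapD f1 f2 f1' f2' : conn_dom f1 f2 -> conn_dom f1' f2' ->
  conn_map (f1 + f1') (f2 + f2') = conn_map f1 f2 + conn_map f1' f2'.
Proof.
by move=> [h1 h2] [h1' h2']; rewrite /conn_map !frame_tnsD // !scalerDr addrACA.
Qed.

Lemma conn_mapZ l f1 f2 : conn_dom f1 f2 ->
  conn_map (l *: f1) (l *: f2) = l *: conn_map f1 f2.
Proof.
move=> [h1 h2]; rewrite /conn_map !frame_tnsZ //.
by rewrite [in RHS]scalerDr !scalerA [q * l]mulrC [q^-1 * l]mulrC.
Qed.

Lemma conn_map_lmul g f1 f2 : inB g -> conn_dom f1 f2 ->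
  conn_map (lmul g f1) (lmul g f2) = lT TT g (conn_map f1 f2).
Proof. by move=> hg [h1 h2]; rewrite /conn_map !frame_tns_lmul // [RHS]lTD !lTZ. Qed.

Lemma conn_map_rmul g f1 f2 : inB g -> conn_dom f1 f2 ->
  conn_map (rmul f1 g) (rmul f2 g) = rT TT (conn_map f1 f2) g.
Proof. by move=> hg [h1 h2]; rewrite /conn_map !frame_tns_rmul // [RHS]rTD !rTZ. Qed.

Lemma conn_map_tns w x y : q != 0 -> inO1 w -> inS (x, y) ->
  conn_map (q^-1 *: rmul w x) (q *: rmul w y) = w ox (x, y).
Proof.
move=> hq hw [/= hx hy]; have [hw1 hw2] := hw.
rewrite /conn_map !frame_tnsZ ?frame_tns_rmul_tns //; try by rewrite /frame_dom /rmul /=; split; deg_tac.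
rewrite !scalerA mulfV ?mulVf // !scale1r -tnsDr //; try by graded.
by rewrite pairD /= addr0 add0r.
Qed.

Lemma conn_map_clifford alpha beta cl f1 f2 : is_clifford TT alpha beta cl -> conn_dom f1 f2 ->
  cl (conn_map f1 f2) = (alpha * q^-1 *: f2.1, beta * q *: f1.2).
Proof.
move=> hcl [h1 h2]; have [clD [clZ _]] := hcl.
rewrite /conn_map clD !clZ !(frame_tns_clifford _ hcl) //= pairD !pairZ /=.
by rewrite !mulr0 !mulr1 !scaler0 add0r addr0 !scalerA [q^-1 * _]mulrC [q * _]mulrC.
Qed.

Lemma conn_mapE f1 f2 : conn_dom f1 f2 ->
  rmulh q f1 1 a ox (d, 0) - q^-1 *: (rmulh q f1 1 c ox (b, 0))
  + rmulh q f2 (-1) d ox (0, a) - q *: (rmulh q f2 (-1) b ox (0, c)) = conn_map f1 f2.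
Proof.
move=> [[h1 h2] [h3 h4]].
rewrite !rmulhE !tnsZl ?expr1z ?exprN1; try by graded.
rewrite /conn_map /frame_tns /= !scalerBr !scalerA [q * q^-1]mulrC.
by rewrite addrA.
Qed.

Lemma nablaS_conn_map s : inS s -> nablaS TT s = conn_map (pid X s.1) (pid X s.2).
Proof. by move=> hs; apply: conn_mapE; apply: conn_dom_pid. Qed.

Lemma sigmaS_conn_map s w : inS s -> inO1 w -> sigmaS TT s w = conn_map (lmul s.1 w) (lmul s.2 w).
Proof. by move=> hs hw; apply: conn_mapE; apply: conn_dom_lmul. Qed.

Local Ltac conn_dom_tac :=
  unfold inB in *; rewrite /conn_dom /frame_dom /inO1 /inS /inB /pid /lmul /rmul ?pairZ ?pairD /=;
  repeat split; deg_tac.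

Lemma nablaS_linear l s s' : inS s -> inS s' ->
  nablaS TT (l *: s + s') = l *: nablaS TT s + nablaS TT s'.
Proof.
case: s s' => [x y] [x' y'] [/= hx hy] [/= hx' hy'].
have hls : inS (l *: (x, y) + (x', y')) by rewrite pairD pairZ; graded.
rewrite !nablaS_conn_map //= !pid_linear conn_mapD ?conn_mapZ //; conn_dom_tac.
Qed.

Lemma nablaS_lmul g s : q != 0 -> inB g -> inS s ->
  nablaS TT (lmul g s) = pid X g ox s + lT TT g (nablaS TT s).
Proof.
case: s => x y hq hg [/= hx hy]; have hgs : inS (lmul g (x, y)) by graded.
rewrite !nablaS_conn_map // (pid_mul g hx) (pid_mul g hy) expr1z exprN1.
by rewrite conn_mapD ?conn_map_tns ?conn_map_lmul //; conn_dom_tac.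
Qed.

Lemma nablaS_rmul g s : inB g -> inS s ->
  nablaS TT (rmul s g) = rT TT (nablaS TT s) g + sigmaS TT s (pid X g).
Proof.
case: s => x y hg [/= hx hy]; have hsg : inS (rmul (x, y) g) by graded.
rewrite sigmaS_conn_map ?nablaS_conn_map //= ?(pid_mul _ hg) ?expr0z ?scale1r; try conn_dom_tac.
by rewrite conn_mapD ?conn_map_rmul //; conn_dom_tac.
Qed.

Lemma sigmaSDl s s' w : inS s -> inS s' -> inO1 w ->
  sigmaS TT (s + s') w = sigmaS TT s w + sigmaS TT s' w.
Proof.
case: s s' w => [x y] [x' y'] [w1 w2] [/= hx hy] [/= hx' hy'] [/= hw1 hw2].
rewrite pairD !sigmaS_conn_map //= ?lmulDl ?conn_mapD //; conn_dom_tac.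
Qed.

Lemma sigmaSDr s w w' : inS s -> inO1 w -> inO1 w' ->
  sigmaS TT s (w + w') = sigmaS TT s w + sigmaS TT s w'.
Proof.
case: s w w' => [x y] [w1 w2] [w1' w2'] [/= hx hy] [/= hw1 hw2] [/= hw1' hw2'].
rewrite !sigmaS_conn_map ?lmulDr ?conn_mapD //; conn_dom_tac.
Qed.

Lemma sigmaSZl l s w : inS s -> inO1 w -> sigmaS TT (l *: s) w = l *: sigmaS TT s w.
Proof.
case: s w => [x y] [w1 w2] [/= hx hy] [/= hw1 hw2].
rewrite pairZ !sigmaS_conn_map //= ?lmulZl ?conn_mapZ //; conn_dom_tac.
Qed.

Lemma sigmaSZr l s w : inS s -> inO1 w -> sigmaS TT s (l *: w) = l *: sigmaS TT s w.
Proof.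
case: s w => [x y] [w1 w2] [/= hx hy] [/= hw1 hw2].
rewrite !sigmaS_conn_map ?lmulZr ?conn_mapZ //; conn_dom_tac.
Qed.

Lemma sigmaS_bal g s w : sigmaS TT (rmul s g) w = sigmaS TT s (lmul g w).
Proof. by rewrite /sigmaS /= -!lmulA. Qed.

Lemma sigmaS_lmul g s w : inB g -> inS s -> inO1 w ->
  sigmaS TT (lmul g s) w = lT TT g (sigmaS TT s w).
Proof.
case: s w => [x y] [w1 w2] hg [/= hx hy] [/= hw1 hw2].
rewrite !sigmaS_conn_map //= -?lmulA ?conn_map_lmul //; conn_dom_tac.
Qed.

Lemma sigmaS_rmul g s w : inB g -> inS s -> inO1 w ->
  sigmaS TT s (rmul w g) = rT TT (sigmaS TT s w) g.
Proof.
case: s w => [x y] [w1 w2] hg [/= hx hy] [/= hw1 hw2].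
rewrite !sigmaS_conn_map ?lmul_rmul ?conn_map_rmul //; conn_dom_tac.
Qed.

Lemma bimodule_connection : q != 0 -> is_bimodule_connection TT.
Proof.
move=> hq; do ![split]; move=> *.
- exact: nablaS_linear.
- exact: nablaS_lmul.
- exact: sigmaSDl.
- exact: sigmaSDr.
- exact: sigmaSZl.
- exact: sigmaSZr.
- exact: sigmaS_bal.
- exact: sigmaS_lmul.
- exact: sigmaS_rmul.
- exact: nablaS_rmul.
Qed.

Lemma clifford_nablaS alpha beta cl s : is_clifford TT alpha beta cl -> inS s ->
  cl (nablaS TT s) = DiracS X alpha beta s.
Proof.
by move=> hcl hs; rewrite nablaS_conn_map // (conn_map_clifford hcl) //; apply: conn_dom_pid.
Qed.

End Tensor.

Lemma starN x : star (- x) = - star x.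
Proof. by rewrite -scaleN1r starZ conjCN1 scaleN1r. Qed.

Lemma dp0 : dp 0 = 0.
Proof. by have := dpL X (-1) 0 0; rewrite scaler0 addr0 scaleN1r addNr. Qed.

Lemma dm0 : dm 0 = 0.
Proof. by have := dmL X (-1) 0 0; rewrite scaler0 addr0 scaleN1r addNr. Qed.

Lemma dpZ l x : dp (l *: x) = l *: dp x.
Proof. by rewrite -[l *: x]addr0 dpL dp0 addr0. Qed.

Lemma dmZ l x : dm (l *: x) = l *: dm x.
Proof. by rewrite -[l *: x]addr0 dmL dm0 addr0. Qed.

Lemma dpN x : dp (- x) = - dp x.
Proof. by rewrite -scaleN1r dpZ scaleN1r. Qed.

Lemma dp_star x : q != 0 -> deg (-1) x -> dp (star x) = - star (dm x).
Proof.
move=> hq hx; have := congr1 fst (d_star hx); rewrite /hstar /= => ->.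
by rewrite (_ : - (-1 + 2) = -1) // exprN1 mulNr mulfV // scaleNr scale1r.
Qed.

Lemma dm_star y : q != 0 -> deg 1 y -> dm (star y) = - star (dp y).
Proof.
move=> hq hy; have := congr1 snd (d_star hy); rewrite /hstar /= => ->.
by rewrite (_ : - (1 - 2) = 1) // expr1z mulNr mulVf // scaleNr scale1r.
Qed.

Section Spectral.
Variables (alpha beta delta : R[i]).
Hypotheses (q_real : q \is Num.real) (q_neq0 : q != 0).
Hypotheses (delta_real : delta \is Num.real) (delta_neq0 : delta != 0).
Hypothesis ab_rel : delta ^+ 2 * alpha^* = beta * q ^+ 2.

Local Notation D := (DiracS X alpha beta).
Local Notation J := (JS X delta).

Lemma conj_delta : delta^* = delta.
Proof. exact: conj_Creal. Qed.

Lemma conj_Ndelta_inv : (- delta^-1)^* = - delta^-1.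
Proof. by apply: conj_Creal; rewrite rpredN rpredV. Qed.

Lemma JSK s : J (J s) = - s.
Proof.
case: s => x y; rewrite /JS /= !starZ !starK conj_delta conj_Ndelta_inv !scalerA.
by rewrite mulNr mulVf // mulrN mulfV // !scaleNr !scale1r.
Qed.

Lemma JS_gammaS s : J (gammaS s) = - gammaS (J s).
Proof. by case: s => x y; rewrite /JS /gammaS pairN /= starN scalerN opprK. Qed.

Lemma DiracS_gammaS s : D (gammaS s) = - gammaS (D s).
Proof. by case: s => x y; rewrite /DiracS /gammaS pairN /= dpN scalerN opprK. Qed.

Lemma JS_lmul_JSinv h s : J (lmul h (JSinv X delta s)) = rmul s (star h).
Proof.
case: s => x y; rewrite /JSinv /JS /lmul /rmul /= !starM !starN !starZ !starK.
rewrite conj_delta conj_Ndelta_inv !mulNr -!scalerAl !scalerN !scalerA.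
by rewrite mulNr mulVf // mulrN mulfV // !scaleNr !scale1r !opprK.
Qed.

Lemma conj_q : q^* = q.
Proof. exact: conj_Creal. Qed.

Lemma conj_ab_rel : delta ^+ 2 * alpha = beta^* * q ^+ 2.
Proof.
have := congr1 Num.conj ab_rel; rewrite !rmorphM /= conj_delta conj_q conjCK.
by rewrite !expr2.
Qed.

Lemma JS_DiracS s : inS s -> J (D s) = D (J s).
Proof.
case: s => x y [/= hx hy].
rewrite /JS /DiracS /= !starZ dpZ dmZ dp_star ?dm_star // !rmorphM /= fmorphV /= conj_q.
rewrite !scalerN !scalerA -!(scaleNr _ (star _)); congr (_ *: _, _ *: _).
- have -> : beta^* = delta ^+ 2 * alpha / q ^+ 2.
    by rewrite conj_ab_rel mulfK // expf_neq0.
  by field; rewrite q_neq0 delta_neq0.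
- have -> : alpha^* = beta * q ^+ 2 / delta ^+ 2.
    by rewrite -ab_rel mulrC mulKf // expf_neq0.
  by field; rewrite q_neq0 delta_neq0.
Qed.

Lemma DiracS_commutator g s : inS s ->
  D (lmul g s) - lmul g (D s) = (alpha *: (dp g * s.2), beta *: (dm g * s.1)).
Proof.
case: s => x y [/= hx hy].
rewrite /DiracS /lmul pairB /= (dp_leib g hy) (dm_leib g hx) expr1z exprN1.
by rewrite !scalerDr -!scalerAr !addrK !scalerA mulfVK // mulfK.
Qed.

Lemma DiracS_commutator_rmul g h s : inB h -> inS s ->
  D (lmul g (rmul s h)) - lmul g (D (rmul s h)) = rmul (D (lmul g s) - lmul g (D s)) h.
Proof.
case: s => x y hh [/= hx hy].
by rewrite !DiracS_commutator /rmul /= -?scalerAl ?mulrA //; graded.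
Qed.

Lemma real_spectral : real_spectral_conditions X alpha beta delta.
Proof.
do ![split].
- by move=> s _; apply: JSK.
- by move=> s _; apply: JS_gammaS.
- by case=> x y _; rewrite /gammaS /= opprK.
- by move=> g [x y] _ _; rewrite /gammaS /lmul /= mulrN.
- by move=> s _; apply: DiracS_gammaS.
- by move=> g h s _ _ _; rewrite !JS_lmul_JSinv lmul_rmul.
- exact: JS_DiracS.
- move=> g h s _ hh hs.
  by rewrite !JS_lmul_JSinv DiracS_commutator_rmul ?rmulBl ?subrr //; graded.
Qed.

End Spectral.

End QSphere.

Theorem mainTheorem6 (R : realType) (q alpha beta delta : R[i])
    (A : algType R[i]) (X : qSU2 q A) (T : lmodType R[i]) (TT : bal_tensor X T) :
  q \is Num.real -> q != 0 ->
  delta \is Num.real -> delta != 0 ->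
  delta ^+ 2 * alpha^* = beta * q ^+ 2 ->
  is_bimodule_connection TT
  /\ (forall cl : T -> A * A, is_clifford TT alpha beta cl ->
        forall s, inS X s -> cl (nablaS TT s) = DiracS X alpha beta s)
  /\ real_spectral_conditions X alpha beta delta.
Proof.
move=> q_real q_neq0 delta_real delta_neq0 ab_rel.
split; first exact: bimodule_connection.
split; first by move=> cl hcl s; apply: clifford_nablaS.
exact: real_spectral.
Qed.
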